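(* Let $\pi\in\mathfrak{S}_m$. If $\pi_1=1$, $\pi_m=m$, and $|\mathcal{O}_\pi|=2$, then $\pi$ and its reversal $\pi^R=\pi_m\pi_{m-1}\cdots\pi_1$ are super-strongly c-Wilf equivalent.
   Context: The standardization $\operatorname{st}(w)$ of a word of distinct integers replaces its smallest entry by 1, the next smallest by 2, etc. For $\pi\in\mathfrak{S}_m$ and $\sigma\in\mathfrak{S}_n$, $\operatorname{Em}(\pi,\sigma)=\{i\in[n-m+1]:\operatorname{st}(\sigma_i\cdots\sigma_{i+m-1})=\pi\}$. For a set $S$ of positive integers, $a^\pi_{n,S}$ is the number of $\sigma\in\mathfrak{S}_n$ with $\operatorname{Em}(\pi,\sigma)=S$; $\pi,\tau$ are super-strongly c-Wilf equivalent if $a^\pi_{n,S}=a^\tau_{n,S}$ for all $n,S$. The overlap set is $\mathcal{O}_\pi=\{i\in[m-1]:\operatorname{st}(\pi_{i+1}\cdots\pi_m)=\operatorname{st}(\pi_1\cdots\pi_{m-i})\}$. *)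

From mathcomp Require Import all_boot all_order all_fingroup.
Set Implicit Arguments. Unset Strict Implicit. Unset Printing Implicit Defensive.

(* Permutations of [m] are elements of 'S_m (values in 'I_m, i.e. 0-indexed);
   pword p is its one-line notation as a word of positive integers 1..m. *)
Definition pword m (p : 'S_m) : seq nat := [seq (p i).+1 | i <- enum 'I_m].

Definition st (w : seq nat) : seq nat := [seq count (fun y => y <= x) w | x <- w].

(* factor sigma_i ... sigma_{i+k-1} (1-indexed i) *)
Definition factor (w : seq nat) (i k : nat) : seq nat := take k (drop i.-1 w).

(* Em(pi, sigma) as the list of 1-indexed positions i in [n-m+1] *)
Definition Em m n (p : 'S_m) (s : 'S_n) : seq nat :=
  [seq i <- iota 1 (n - m + 1) | st (factor (pword s) i m) == pword p].

(* a^pi_{n,S} : number of sigma in S_n with Em(pi,sigma) = S (as sets) *)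
Definition acount m (p : 'S_m) (n : nat) (S : seq nat) : nat :=
  #|[set s : 'S_n | all (fun j => j \in S) (Em p s) && all (fun j => j \in Em p s) S]|.

Definition super_strongly_cWilf m (p q : 'S_m) : Prop :=
  forall (n : nat) (S : seq nat), acount p n S = acount q n S.

Definition overlaps m (p : 'S_m) : seq nat :=
  [seq i <- iota 1 (m.-1) |
     st (drop i (pword p)) == st (take (m - i) (pword p))].

Definition rev_perm m (p : 'S_m) : 'S_m := (perm (@rev_ord_inj m) * p)%g.

(* Since p_1 = 1, p_m = m and O_p = {m-2, m-1}, two occurrences of p in a
   permutation s share at most two entries, and occurrences sharing entries
   form chains at positions a, a + (m-2), ..., a + r(m-2).  On the segment
   [a, b] covered by a chain the entry at a is the smallest and the entry at b
   the largest.  Reversing the positions of [a, b] and mirroring the set of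
   values found there therefore fixes both endpoints, leaves every occurrence
   outside (a, b) alone, and turns each occurrence of p in the chain into one
   of its reverse-complement p^RC.  Doing this chain by chain is an involution,
   so for every set L of positions as many permutations have occurrences of p
   at all of L as of p^RC; complementing values turns p^RC into p^R, and
   inclusion-exclusion over sets of positions gives the equality of the
   a_{n,S}. *)

From mathcomp Require Import all_boot all_order all_fingroup.
From mathcomp Require Import zify.
Set Implicit Arguments. Unset Strict Implicit. Unset Printing Implicit Defensive.

Lemma sub_count_lt (T : eqType) (a1 a2 : pred T) (s : seq T) :
  subpred a1 a2 -> (exists2 x, x \in s & a2 x && ~~ a1 x) ->
  count a1 s < count a2 s.
Proof.
move=> a12 [x]; elim: s => [|y s IHs] //= xs /andP[a2x Na1x].
move: xs; rewrite in_cons => /orP[/eqP <-|xs].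
  by rewrite (negbTE Na1x) a2x add1n ltnS sub_count.
have lt12 : count a1 s < count a2 s by apply: IHs; rewrite ?a2x.
case a1y: (a1 y); first by rewrite (a12 _ a1y) !add1n ltnS.
exact: leq_trans lt12 (leq_addl _ _).
Qed.

Lemma card_involution (T : finType) (f : T -> T) (P Q : pred T) :
  involutive f -> (forall x, P x -> Q (f x)) -> (forall x, Q x -> P (f x)) ->
  #|[set x | P x]| = #|[set x | Q x]|.
Proof.
move=> fK PQ QP; rewrite -(card_preimset _ (can_inj fK)); apply: eq_card => x.
by rewrite !inE; apply/idP/idP => [/PQ|/QP //]; rewrite fK.
Qed.

Lemma eq_card_fibers_of_supsets (X U : finType) (f g : X -> {set U}) :
  (forall B : {set U}, #|[set x | B \subset f x]| = #|[set x | B \subset g x]|) ->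
  forall B : {set U}, #|[set x | f x == B]| = #|[set x | g x == B]|.
Proof.
move=> eq_sup.
have card_sup (h : X -> {set U}) (B : {set U}) :
    #|[set x | B \subset h x]| = \sum_(C : {set U} | B \subset C) #|[set x | h x == C]|.
  rewrite -sum1_card (partition_big h (fun C => B \subset C)) => [|x]; last by rewrite inE.
  apply: eq_bigr => C subBC; rewrite -sum1_card; apply: eq_bigl => x.
  by rewrite !inE; apply/andP/eqP => [[_ /eqP]|->].
move=> B; have [k] := ubnP #|~: B|; elim: k B => // k IHk B lt_compl.
have := eq_sup B; rewrite !card_sup (bigD1 B) //= (bigD1 B (P := fun C => B \subset C)) //=.
have -> : \sum_(C : {set U} | (B \subset C) && (C != B)) #|[set x | f x == C]|
        = \sum_(C : {set U} | (B \subset C) && (C != B)) #|[set x | g x == C]|.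
  apply: eq_bigr => C /andP[subBC neCB]; apply: IHk.
  have : ~: C \proper ~: B by rewrite properC properEneq eq_sym neCB.
  by move/proper_card; lia.
by move/addIn.
Qed.

Lemma size_st w : size (st w) = size w.
Proof. exact: size_map. Qed.

Lemma nth_st w u : u < size w ->
  nth 0 (st w) u = count (fun y => y <= nth 0 w u) w.
Proof. exact: nth_map. Qed.

Lemma st_ltE w u v : u < size w -> v < size w ->
  (nth 0 (st w) u < nth 0 (st w) v) = (nth 0 w u < nth 0 w v).
Proof.
move=> ltu ltv; rewrite !nth_st //.
case: (ltnP (nth 0 w u) (nth 0 w v)) => wuv.
  apply: sub_count_lt => [x lex|]; first exact: leq_trans lex (ltnW wuv).
  by exists (nth 0 w v); rewrite ?mem_nth // leqnn -ltnNge.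
by rewrite ltnNge sub_count // => x lex; apply: leq_trans lex wuv.
Qed.

Lemma st_eqP (w1 w2 : seq nat) : size w1 = size w2 ->
  st w1 = st w2 <-> (forall u v, u < size w1 -> v < size w1 ->
                       (nth 0 w1 u < nth 0 w1 v) = (nth 0 w2 u < nth 0 w2 v)).
Proof.
move=> sz; split=> [st12 u v ltu ltv|cmp12].
  by rewrite -st_ltE // st12 st_ltE -?sz.
apply: (@eq_from_nth _ 0); rewrite ?size_st // => u ltu.
have count_idx w P : count P w = count (P \o nth 0 w) (iota 0 (size w)).
  by rewrite -[in LHS](mkseq_nth 0 w) count_map.
rewrite !nth_st -?sz // (count_idx w1) (count_idx w2) -sz.
apply: eq_in_count => v; rewrite mem_iota => /andP[_ ltv] /=.
by rewrite leqNgt [in RHS]leqNgt cmp12.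
Qed.

Definition entry n (s : 'S_n) (x : nat) : nat := nth 0 (pword s) x.

Lemma size_pword n (s : 'S_n) : size (pword s) = n.
Proof. by rewrite size_map size_enum_ord. Qed.

Lemma entryE n (s : 'S_n) (x : 'I_n) : entry s x = (s x).+1.
Proof. by rewrite /entry (nth_map x) ?size_enum_ord // nth_ord_enum. Qed.

Lemma entry_default n (s : 'S_n) x : n <= x -> entry s x = 0.
Proof. by move=> lenx; rewrite /entry nth_default // size_pword. Qed.

Lemma entry_bounds n (s : 'S_n) x : x < n -> 0 < entry s x <= n.
Proof. by move=> ltxn; have -> : x = Ordinal ltxn by []; rewrite entryE ltn_ord. Qed.

Lemma entry_inj n (s : 'S_n) x y : x < n -> y < n -> entry s x = entry s y -> x = y.
Proof.
move=> ltxn ltyn; have -> : x = Ordinal ltxn by []; have -> : y = Ordinal ltyn by [].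
by rewrite !entryE => -[/val_inj/perm_inj ->].
Qed.

Lemma st_pword n (s : 'S_n) : st (pword s) = pword s.
Proof.
apply: (@eq_from_nth _ 0); rewrite size_st // size_pword => x ltxn.
rewrite nth_st ?size_pword // -/(entry s x); have -> : x = Ordinal ltxn by [].
rewrite entryE; set k := s (Ordinal ltxn).
have perm_img : perm_eq [seq s i | i <- enum 'I_n] (enum 'I_n).
  apply: uniq_perm; rewrite ?(map_inj_uniq (@perm_inj _ s)) ?enum_uniq // => i.
  by rewrite mem_enum; apply/mapP; exists (s^-1 i)%g; rewrite ?mem_enum ?permKV.
have count_iota j : count (fun i => i <= j) (iota 0 n) = minn j.+1 n.
  elim: n {s x ltxn k perm_img} => [|n IHn]; first by rewrite minn0.
  by rewrite -addn1 iotaD count_cat IHn /=; lia.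
transitivity (count (fun i : 'I_n => i <= k) [seq s i | i <- enum 'I_n]).
  by rewrite /pword !count_map.
rewrite (seq.permP perm_img) -(count_map val (fun i => i <= k)) val_enum_ord count_iota.
by have := ltn_ord k; lia.
Qed.

(* Patterns are handled through their comparison relations, so that the
   reverse-complement [revcomp m R] below needs no permutation of its own. *)
Definition perm_rel m (p : 'S_m) (u v : nat) : bool := entry p u < entry p v.

Definition occurs m n (R : nat -> nat -> bool) (s : 'S_n) (i : nat) : bool :=
  (i + m <= n) &&
  [forall u : 'I_m, [forall v : 'I_m, (entry s (i + u) < entry s (i + v)) == R u v]].

Lemma occursP m n R (s : 'S_n) i :
  reflect (i + m <= n /\ forall u v, u < m -> v < m ->
             (entry s (i + u) < entry s (i + v)) = R u v)
          (occurs m R s i).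
Proof.
apply: (iffP andP) => -[lein cmpR]; split=> //.
  by move=> u v ltum ltvm; move/forallP/(_ (Ordinal ltum))/forallP/(_ (Ordinal ltvm))/eqP: cmpR.
by apply/forallP=> u; apply/forallP=> v; rewrite cmpR.
Qed.

Lemma eq_occurs m n R1 R2 (s : 'S_n) i :
  (forall u v, u < m -> v < m -> R1 u v = R2 u v) -> occurs m R1 s i = occurs m R2 s i.
Proof.
move=> R12; apply/occursP/occursP => -[lein cmpR]; split=> // u v ltum ltvm.
  by rewrite -R12 ?cmpR.
by rewrite R12 ?cmpR.
Qed.

Lemma occurs_entries m n R (s1 s2 : 'S_n) i :
  (forall u, u < m -> entry s1 (i + u) = entry s2 (i + u)) ->
  occurs m R s1 i = occurs m R s2 i.
Proof.
move=> eq_entries; apply/occursP/occursP => -[lein cmp_i]; split=> // u v ltu ltv.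
  by rewrite -!eq_entries ?cmp_i.
by rewrite !eq_entries ?cmp_i.
Qed.

Lemma mem_Em m n (p : 'S_m) (s : 'S_n) i :
  (i \in Em p s) = (0 < i) && occurs m (perm_rel p) s i.-1.
Proof.
rewrite /Em mem_filter mem_iota /factor.
set f := take m _.
have size_f : size f = minn m (n - i.-1).
  by rewrite size_take size_drop size_pword; case: ifP; lia.
have nth_f u : u < m -> nth 0 f u = entry s (i.-1 + u) by move=> ltum; rewrite nth_take ?nth_drop.
rewrite -(st_pword p); apply/andP/andP => -[st_f bounds_i].
  have size_fp : size f = size (pword p) by rewrite -size_st (eqP st_f) size_st.
  have := size_fp; rewrite size_pword size_f => sz; split; first lia.
  have cmp_f := (st_eqP size_fp).1 (eqP st_f); rewrite size_fp size_pword in cmp_f.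
  by apply/occursP; split=> [|u v ltum ltvm]; [lia|rewrite -!nth_f // cmp_f].
case/occursP: bounds_i => lein cmp_p; split; last lia.
apply/eqP/st_eqP => [|u v]; rewrite size_f ?size_pword; first lia.
by move=> ltu ltv; rewrite !nth_f ?cmp_p //; lia.
Qed.

Definition self_overlap m (R : nat -> nat -> bool) (d : nat) : Prop :=
  forall u v, u < m - d -> v < m - d -> R (d + u) (d + v) = R u v.

Lemma mem_overlaps m (p : 'S_m) d :
  d \in overlaps p <-> 0 < d < m /\ self_overlap m (perm_rel p) d.
Proof.
rewrite /overlaps mem_filter mem_iota add1n ltnS; set w := pword p.
have size_drop_w : size (drop d w) = m - d by rewrite size_drop size_pword.
have size_take_w : size (take (m - d) w) = m - d by rewrite size_takel // size_pword leq_subr.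
have st_iff := st_eqP (etrans size_drop_w (esym size_take_w)); rewrite size_drop_w in st_iff.
split=> [/andP[/eqP/st_iff cmp_w range_d]|[range_d ovl]].
  split; first lia.
  by move=> u v ltu ltv; have := cmp_w u v ltu ltv; rewrite !nth_drop !nth_take.
apply/andP; split; last lia.
by apply/eqP/st_iff => u v ltu ltv; rewrite !nth_drop !nth_take // -[_ < _]/(perm_rel p _ _) ovl.
Qed.

(** * Framed patterns *)

(* For [R = perm_rel p] these are the hypotheses [p_1 = 1], [p_m = m] and
   [O_p = {m-2, m-1}] of the theorem. *)
Record framed_pattern m (R : nat -> nat -> bool) : Prop := FramedPattern {
  framed_size : 2 < m;
  framed_first : forall u, 0 < u < m -> R 0 u;
  framed_last : forall u, u < m.-1 -> R u m.-1;
  framed_no_overlap : forall d, 0 < d <= m - 3 -> ~ self_overlap m R d }.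

Lemma perm_rel_first m (p : 'S_m) u : entry p 0 = 1 -> 0 < u < m -> perm_rel p 0 u.
Proof.
move=> p_first u_range; have := entry_bounds p (_ : u < m).
have : u != 0 -> entry p u != entry p 0 by apply: contra => /eqP/entry_inj ->; lia.
by rewrite /perm_rel p_first; lia.
Qed.

Lemma perm_rel_last m (p : 'S_m) u : entry p m.-1 = m -> u < m.-1 -> perm_rel p u m.-1.
Proof.
move=> p_last lt_u; have := entry_bounds p (_ : u < m).
have : u != m.-1 -> entry p u != entry p m.-1 by apply: contra => /eqP/entry_inj ->; lia.
by rewrite /perm_rel p_last; lia.
Qed.

Lemma overlaps_last1 m (p : 'S_m) : 1 < m -> m - 1 \in overlaps p.
Proof.
move=> gt1m; apply/mem_overlaps; split=> [|u v ltu ltv]; first lia.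
have [-> ->] : u = 0 /\ v = 0 by lia.
by rewrite /perm_rel !ltnn.
Qed.

Lemma overlaps_last2 m (p : 'S_m) : 2 < m -> entry p 0 = 1 -> entry p m.-1 = m ->
  m - 2 \in overlaps p.
Proof.
move=> gt2m p_first p_last; apply/mem_overlaps; split=> [|u v ltu ltv]; first lia.
have lt_ends : entry p (m - 2) < entry p (m - 2 + 1).
  by rewrite (_ : m - 2 + 1 = m.-1); [apply: perm_rel_last|]; lia.
have lt01 : entry p 0 < entry p 1 by apply: perm_rel_first; lia.
by case: u ltu => [|[|u]] ltu; case: v ltv => [|[|v]] ltv;
  rewrite /perm_rel ?addn0 ?ltnn //; lia.
Qed.

Lemma framed_perm_rel m (p : 'S_m) :
  head 0 (pword p) = 1 -> last 0 (pword p) = m -> size (overlaps p) = 2 ->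
  framed_pattern m (perm_rel p).
Proof.
move=> p_first p_last size_ovl.
have {}p_first : entry p 0 = 1 by rewrite /entry nth0.
have {}p_last : entry p m.-1 = m by have := nth_last 0 (pword p); rewrite size_pword p_last.
have gt2m : 2 < m.
  have : size (overlaps p) <= m.-1 by rewrite size_filter (leq_trans (count_size _ _)) ?size_iota.
  by rewrite size_ovl; lia.
split=> // [u|u|d d_range ovl_d]; [exact: perm_rel_first|exact: perm_rel_last|].
have : size [:: d; m - 2; m - 1] <= size (overlaps p).
  apply: uniq_leq_size => [|x]; first by rewrite /= !inE; apply/and3P; split; lia.
  rewrite !inE => /or3P[] /eqP ->; rewrite ?overlaps_last1 ?overlaps_last2 //; try lia.
  by apply/mem_overlaps; split; first lia.
by rewrite size_ovl.
Qed.

Definition revcomp m (R : nat -> nat -> bool) (u v : nat) : bool := R (m.-1 - v) (m.-1 - u).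

Lemma framed_revcomp m R : framed_pattern m R -> framed_pattern m (revcomp m R).
Proof.
case=> gt2m first_min last_max no_ovl; split=> // [u u_range|u u_range|d d_range ovl_d].
- by rewrite /revcomp subn0; apply: last_max; lia.
- by rewrite /revcomp subnn -[m.-1 - u]add0n; apply: first_min; lia.
apply: (no_ovl d d_range) => u v ltu ltv.
have := ovl_d (m.-1 - d - v) (m.-1 - d - u) ltac:(lia) ltac:(lia); rewrite /revcomp.
by have [-> -> -> ->] : [/\ m.-1 - (d + (m.-1 - d - u)) = u, m.-1 - (d + (m.-1 - d - v)) = v,
  m.-1 - (m.-1 - d - u) = d + u & m.-1 - (m.-1 - d - v) = d + v] by split; lia.
Qed.

Lemma occurs_revcompK m n R (s : 'S_n) i :
  occurs m (revcomp m (revcomp m R)) s i = occurs m R s i.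
Proof. by apply: eq_occurs => u v ltu ltv; rewrite /revcomp !subKn //; lia. Qed.

Lemma occurs_gap m n R (s : 'S_n) i j : framed_pattern m R ->
  occurs m R s i -> occurs m R s j -> i < j -> m - 2 <= j - i.
Proof.
case=> gt2m _ _ no_ovl /occursP[lein cmp_i] /occursP[lejn cmp_j] ltij.
rewrite leqNgt; apply/negP => close_ij; apply: (no_ovl (j - i)); first lia.
move=> u v ltu ltv; rewrite -cmp_i -?cmp_j; try lia.
by rewrite !addnA subnKC // ltnW.
Qed.

(** * Flipping a segment *)

Section Mirror.
Variables (n : nat) (V : {set 'I_n}).

Definition sorted_set : seq 'I_n := [seq x <- enum 'I_n | x \in V].

(* the k-th smallest element of [V] is sent to the k-th largest *)
Definition mirror (v : 'I_n) : 'I_n := nth v (rev sorted_set) (index v sorted_set).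

Lemma mem_sorted_set v : (v \in sorted_set) = (v \in V).
Proof. by rewrite mem_filter mem_enum andbT. Qed.

Lemma sorted_set_uniq : uniq sorted_set.
Proof. exact/filter_uniq/enum_uniq. Qed.

Lemma size_sorted_set : size sorted_set = #|V|.
Proof. by rewrite -(card_uniqP sorted_set_uniq); apply: eq_card mem_sorted_set. Qed.

Lemma sorted_set_ltn : sorted (fun x y : 'I_n => x < y) sorted_set.
Proof.
apply: sorted_filter; first exact: ltn_trans.
by have := iota_ltn_sorted 0 n; rewrite -val_enum_ord sorted_map.
Qed.

Lemma nth_sorted_set_lt x0 i j : i < #|V| -> j < #|V| ->
  (nth x0 sorted_set i < nth x0 sorted_set j) = (i < j).
Proof.
rewrite -size_sorted_set => lti ltj.
have ltn_ord_trans : transitive (fun x y : 'I_n => x < y) by move=> y x z; apply: ltn_trans.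
have lt_nth := sorted_ltn_nth ltn_ord_trans x0 sorted_set_ltn.
case: (ltngtP i j) => [ltij|ltji|->]; last exact: ltnn.
  exact: lt_nth.
by apply/negbTE; rewrite -leqNgt ltnW // (lt_nth j i).
Qed.

Lemma index_sorted_set v : v \in V -> index v sorted_set < #|V|.
Proof. by rewrite -size_sorted_set index_mem mem_sorted_set. Qed.

Lemma mirrorE v : v \in V -> mirror v = nth v sorted_set (#|V| - (index v sorted_set).+1).
Proof. by move=> Vv; rewrite /mirror nth_rev size_sorted_set ?index_sorted_set. Qed.

Lemma mirror_mem v : v \in V -> mirror v \in V.
Proof.
move=> Vv; rewrite mirrorE // -mem_sorted_set mem_nth // size_sorted_set.
by have := index_sorted_set Vv; lia.
Qed.

Lemma mirrorK : {in V, involutive mirror}.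
Proof.
move=> v Vv; have ltk := index_sorted_set Vv.
rewrite (mirrorE (mirror_mem Vv)) {2}mirrorE // index_uniq ?sorted_set_uniq ?size_sorted_set;
  try lia.
rewrite (_ : _ - _ = index v sorted_set); last lia.
by rewrite (set_nth_default v) ?nth_index ?mem_sorted_set ?size_sorted_set //; lia.
Qed.

Lemma mirror_lt : {in V &, forall u v, (mirror u < mirror v) = (v < u)}.
Proof.
move=> u v Vu Vv; have ltu := index_sorted_set Vu; have ltv := index_sorted_set Vv.
have -> : (v < u) = (index v sorted_set < index u sorted_set).
  by rewrite -[RHS](nth_sorted_set_lt u) // !nth_index ?mem_sorted_set.
by rewrite !mirrorE // (set_nth_default u v) ?size_sorted_set ?nth_sorted_set_lt; try lia.
Qed.

Lemma mirror_min_max u w : u \in V -> w \in V ->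
  {in V, forall v : 'I_n, u <= v <= w} -> mirror u = w.
Proof.
move=> Vu Vw bounds; apply/val_inj/eqP; rewrite eqn_leq (andP (bounds _ (mirror_mem Vu))).2 /=.
rewrite -{1}(mirrorK Vw) leqNgt mirror_lt ?mirror_mem // -leqNgt.
exact: (andP (bounds _ (mirror_mem Vw))).1.
Qed.
End Mirror.

Section Twist.
Variables (n : nat) (I : {set 'I_n}) (rho : 'I_n -> 'I_n).
Hypothesis rho_mem : {in I, forall x, rho x \in I}.
Hypothesis rhoK : {in I, involutive rho}.

Definition twist_fun (s : 'S_n) (x : 'I_n) : 'I_n :=
  if x \in I then mirror (s @: I) (s (rho x)) else s x.

Lemma perm_mem_img (s : 'S_n) x : (s x \in s @: I) = (x \in I).
Proof. exact/mem_imset/perm_inj. Qed.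

Lemma twist_fun_mem (s : 'S_n) x : x \in I -> twist_fun s x \in s @: I.
Proof. by move=> Ix; rewrite /twist_fun Ix mirror_mem ?perm_mem_img ?rho_mem. Qed.

Lemma twist_fun_inj s : injective (twist_fun s).
Proof.
move=> x y; case Ix: (x \in I); case Iy: (y \in I).
- rewrite /twist_fun Ix Iy => /(congr1 (mirror (s @: I))).
  rewrite !mirrorK ?perm_mem_img ?rho_mem // => /perm_inj/(congr1 rho).
  by rewrite !rhoK.
- by move=> eq_xy; move: (twist_fun_mem s Ix); rewrite eq_xy /twist_fun Iy perm_mem_img Iy.
- by move=> eq_xy; move: (twist_fun_mem s Iy); rewrite -eq_xy /twist_fun Ix perm_mem_img Ix.
- by rewrite /twist_fun Ix Iy => /perm_inj.
Qed.

Definition twist (s : 'S_n) : 'S_n := perm (@twist_fun_inj s).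

Lemma twistE s x : twist s x = twist_fun s x.
Proof. exact: permE. Qed.

Lemma twist_img s : twist s @: I = s @: I.
Proof.
apply/setP => v; apply/imsetP/idP => [[x Ix ->]|Vv].
  by rewrite twistE twist_fun_mem.
have /imsetP[x Ix mirror_v] := mirror_mem Vv.
exists (rho x); rewrite ?rho_mem // twistE /twist_fun rho_mem // rhoK //.
by rewrite -mirror_v mirrorK.
Qed.

Lemma twistK : involutive twist.
Proof.
move=> s; apply/permP => x; rewrite twistE /twist_fun.
case: ifP => Ix; last by rewrite twistE /twist_fun Ix.
by rewrite twist_img twistE /twist_fun rho_mem // rhoK // mirrorK ?perm_mem_img.
Qed.

Lemma twist_lt s : {in I &, forall x y, (twist s x < twist s y) = (s (rho y) < s (rho x))}.
Proof.
by move=> x y Ix Iy; rewrite !twistE /twist_fun Ix Iy mirror_lt ?perm_mem_img ?rho_mem.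
Qed.

Lemma twist_extremes (s : 'S_n) u w : u \in I -> w \in I -> rho u = w ->
  {in I, forall x, s u <= s x <= s w} -> twist s u = s u /\ twist s w = s w.
Proof.
move=> Iu Iw rho_u bounds.
have mirror_u : mirror (s @: I) (s u) = s w.
  by apply: mirror_min_max; rewrite ?perm_mem_img // => _ /imsetP[x Ix ->]; apply: bounds.
have rho_w : rho w = u by rewrite -rho_u rhoK.
rewrite !twistE /twist_fun Iu Iw rho_u rho_w mirror_u.
by rewrite -mirror_u mirrorK ?perm_mem_img.
Qed.
End Twist.

Section Flip.
Variables (n a b : nat).
Hypothesis ltbn : b < n.

Definition segment : {set 'I_n} := [set x : 'I_n | a <= x <= b].

Definition seg_reflect (x : 'I_n) : 'I_n := insubd x (a + b - x).

Lemma seg_reflectE (x : 'I_n) : x \in segment -> seg_reflect x = a + b - x :> nat.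
Proof. by rewrite inE => x_in; rewrite /seg_reflect insubdK // unfold_in /=; lia. Qed.

Lemma seg_reflect_mem : {in segment, forall x, seg_reflect x \in segment}.
Proof. by move=> x x_in; rewrite inE seg_reflectE //; move: x_in; rewrite inE; lia. Qed.

Lemma seg_reflectK : {in segment, involutive seg_reflect}.
Proof.
move=> x x_in; apply: ord_inj; rewrite !seg_reflectE ?seg_reflect_mem //.
by move: x_in; rewrite inE; lia.
Qed.

Definition seg_flip : 'S_n -> 'S_n := twist seg_reflect_mem seg_reflectK.

Lemma seg_flipK : involutive seg_flip.
Proof. exact: twistK. Qed.

Lemma entry_seg_flip_out s x : ~~ (a <= x <= b) -> entry (seg_flip s) x = entry s x.
Proof.
move=> x_out; case: (ltnP x n) => [ltxn|lenx]; last by rewrite !entry_default.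
have -> : x = Ordinal ltxn by [].
by rewrite !entryE twistE /twist_fun inE (negbTE x_out).
Qed.

Lemma entry_seg_flip_lt s x y : a <= x <= b -> a <= y <= b ->
  (entry (seg_flip s) x < entry (seg_flip s) y) = (entry s (a + b - y) < entry s (a + b - x)).
Proof.
move=> x_in y_in; have ltxn : x < n by lia.
have ltyn : y < n by lia.
have [X_in Y_in] : Ordinal ltxn \in segment /\ Ordinal ltyn \in segment by rewrite !inE.
have -> : x = Ordinal ltxn by []; have -> : y = Ordinal ltyn by [].
by rewrite -!(seg_reflectE (x := Ordinal _)) // !entryE !ltnS twist_lt.
Qed.

(* Mirroring the values of [a, b] swaps their minimum and maximum, which sit
   at the reflected positions [a] and [b]: both endpoints are fixed. *)
Lemma entry_seg_flip_fixed s x : a <= b ->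
    (forall z, a <= z <= b -> entry s a <= entry s z <= entry s b) ->
  ~~ (a < x < b) -> entry (seg_flip s) x = entry s x.
Proof.
move=> leab bounds x_not_in.
have fixed_ends : entry (seg_flip s) a = entry s a /\ entry (seg_flip s) b = entry s b.
  have ltan : a < n by lia.
  set A := Ordinal ltan; set B := Ordinal ltbn.
  have [A_in B_in] : A \in segment /\ B \in segment by rewrite !inE /=; lia.
  have rho_A : seg_reflect A = B by apply: ord_inj; rewrite seg_reflectE //=; lia.
  have seg_bounds : {in segment, forall x, s A <= s x <= s B}.
    by move=> X; rewrite inE => /bounds; rewrite (entryE s A) (entryE s B) entryE.
  have [fix_A fix_B] := twist_extremes seg_reflect_mem seg_reflectK A_in B_in rho_A seg_bounds.
  by rewrite (entryE _ A) (entryE _ B) /seg_flip fix_A fix_B -!entryE.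
have [[->|->]|x_out] : (x = a \/ x = b) \/ ~~ (a <= x <= b) by lia.
- exact: fixed_ends.1.
- exact: fixed_ends.2.
- exact: entry_seg_flip_out.
Qed.
End Flip.

(** * Chains of occurrences *)

Definition occurs_chain m d R n (s : 'S_n) (a r : nat) : Prop :=
  forall k, k <= r -> occurs m R s (a + k * d).

Section Chain.
Variables (m n d : nat) (R : nat -> nat -> bool).
Hypothesis framed_R : framed_pattern m R.
Hypothesis m_eq : m = d.+2.

Lemma occurs_bounds (s : 'S_n) i : occurs m R s i ->
  forall z, i <= z <= i + m.-1 -> entry s i <= entry s z <= entry s (i + m.-1).
Proof.
case: framed_R => _ first_min last_max _ /occursP[_ cmp_i] z z_range.
have -> : z = i + (z - i) by lia.
have ltum : z - i < m by lia.
have above_first : z - i != 0 -> entry s i < entry s (i + (z - i)).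
  by move=> nz; rewrite -{1}[i]addn0 cmp_i ?first_min //; lia.
have below_last : z - i != m.-1 -> entry s (i + (z - i)) < entry s (i + m.-1).
  by move=> nlast; rewrite cmp_i ?last_max //; lia.
apply/andP; split.
  by case: (eqVneq (z - i) 0) => [->|/above_first/ltnW //]; rewrite addn0.
by case: (eqVneq (z - i) m.-1) => [->|/below_last/ltnW].
Qed.

Lemma chain_bounds (s : 'S_n) a r : occurs_chain m d R s a r ->
  forall z, a <= z <= a + r * d + m.-1 ->
    entry s a <= entry s z <= entry s (a + r * d + m.-1).
Proof.
elim: r => [|r IHr] chain z z_range.
  rewrite mul0n addn0 in z_range *; apply: occurs_bounds => //.
  by rewrite -{1}[a]addn0 -(mul0n d); apply: chain.
have {}IHr := IHr (fun k lek => chain k (leqW lek)).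
set c := a + r.+1 * d; have c_prev : a + r * d + m.-1 = c + 1 by rewrite /c mulSn; lia.
have last_bounds := occurs_bounds (chain r.+1 (leqnn _)); rewrite -/c in last_bounds.
have /andP[a_c _] := IHr c ltac:(rewrite /c mulSn in z_range *; lia).
have /andP[_ prev_top] := last_bounds (c + 1) ltac:(lia).
case: (leqP z (c + 1)) => [le_z_prev|lt_prev_z].
  by have /andP[] := IHr z ltac:(lia); rewrite c_prev; lia.
by have /andP[] := last_bounds z ltac:(lia); lia.
Qed.
End Chain.

Lemma occurs_seg_flip_chain m n d R (s : 'S_n) a r (ltbn : a + r * d + m.-1 < n) :
  m = d.+2 -> occurs_chain m d R s a r ->
  occurs_chain m d (revcomp m R) (seg_flip a ltbn s) a r.
Proof.
move=> m_eq chain k lek; have lekdrd : k * d <= r * d by rewrite leq_mul2r lek orbT.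
apply/occursP; split=> [|u v ltu ltv]; first lia.
have /occursP[_ cmp_rk] := chain (r - k) (leq_subr _ _).
rewrite entry_seg_flip_lt /revcomp -?cmp_rk ?mulnBl; try lia.
have reflect_pos w : w < m ->
  a + (a + r * d + m.-1) - (a + k * d + w) = a + (r * d - k * d) + (m.-1 - w) by lia.
by rewrite !reflect_pos.
Qed.

Lemma occurs_seg_flip_outside m n d R Y (s : 'S_n) a r (ltbn : a + r * d + m.-1 < n) j :
  framed_pattern m R -> m = d.+2 -> occurs_chain m d R s a r ->
  j + m.-1 <= a \/ a + r * d + m.-1 <= j -> occurs m Y (seg_flip a ltbn s) j = occurs m Y s j.
Proof.
move=> framed_R m_eq chain j_out; apply: occurs_entries => u ltum.
apply: entry_seg_flip_fixed; first lia.
  by move=> z; apply: (chain_bounds framed_R m_eq chain).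
lia.
Qed.

Section Flips.
Variables (m n d : nat) (R : nat -> nat -> bool) (A : seq nat).
Hypothesis framed_R : framed_pattern m R.
Hypothesis m_eq : m = d.+2.
Hypothesis A_gaps : forall i j, i \in A -> j \in A -> i < j -> d <= j - i.

Definition occurs_split t (s : 'S_n) : bool :=
  all (fun i => occurs m (if i < t then revcomp m R else R) s i) A.

Definition step_closed t : Prop := forall i, i \in A -> i < t -> i + d \in A -> i + d < t.

Section Step.
Variables (t a r : nat).
Hypothesis t_closed : step_closed t.
Hypothesis a_in : a \in A.
Hypothesis le_ta : t <= a.
Hypothesis a_min : forall i, i \in A -> t <= i -> a <= i.
Hypothesis chain_in : forall k, k <= r -> a + k * d \in A.
Hypothesis chain_end : a + r.+1 * d \notin A.

Lemma before_chain i : i \in A -> i < t -> i + m.-1 <= a.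
Proof.
move=> i_in lt_it; have := A_gaps i_in a_in (leq_trans lt_it le_ta).
have [step|] := eqVneq (a - i) d; last lia.
have := t_closed i_in lt_it; rewrite (_ : i + d = a); last lia.
by move/(_ a_in); lia.
Qed.

Lemma after_chain i : i \in A -> a + r * d + 1 <= i -> a + r * d + m.-1 <= i.
Proof.
move=> i_in le_next_i; have := A_gaps (chain_in (leqnn r)) i_in ltac:(lia).
have [step|] := eqVneq (i - (a + r * d)) d; last lia.
by move: chain_end; rewrite mulSn (_ : a + (d + r * d) = i) ?i_in //; lia.
Qed.

Lemma in_chain i : i \in A -> t <= i < a + r * d + 1 -> exists2 k, k <= r & i = a + k * d.
Proof.
move=> i_in /andP[le_ti lt_i_next]; have le_ai := a_min i_in le_ti.
have gt0d : 0 < d by case: framed_R; lia.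
set q := (i - a) %/ d; have lekr : q <= r by rewrite -ltnS ltn_divLR // mulSn; lia.
exists q => //; have def_i := divn_eq (i - a) d; rewrite -/q in def_i.
have [zero_mod|pos_mod] := posnP ((i - a) %% d); first lia.
by have := A_gaps (chain_in lekr) i_in ltac:(lia); have := ltn_pmod (i - a) gt0d; lia.
Qed.

Lemma step_closed_next : step_closed (a + r * d + 1).
Proof.
move=> i i_in lt_i_next step_in; case: (ltnP i t) => [lt_it|le_ti].
  by have := t_closed i_in lt_it step_in; lia.
have [k lekr def_i] := in_chain i_in ltac:(lia).
case: (ltngtP k r) => [ltkr|ltrk|eq_kr].
- have : k.+1 * d <= r * d by rewrite leq_mul2r ltkr orbT.
  by rewrite def_i mulSn; lia.
- lia.
- by case/negP: chain_end; rewrite -eq_kr mulSn (_ : a + (d + k * d) = i + d) //; lia.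
Qed.

Lemma chain_range k : k <= r -> t <= a + k * d < a + r * d + 1.
Proof.
move=> lekr; have : k * d <= r * d by rewrite leq_mul2r lekr orbT.
lia.
Qed.

Lemma occurs_split_fits t' s : occurs_split t' s -> a + r * d + m.-1 < n.
Proof. by move/allP/(_ _ (chain_in (leqnn r)))/occursP => -[fits _]; lia. Qed.

Lemma card_occurs_split_step :
  #|[set s | occurs_split t s]| = #|[set s | occurs_split (a + r * d + 1) s]|.
Proof.
case: (ltnP (a + r * d + m.-1) n) => [ltbn|lenb]; last first.
  have no_fit t' : [set s | occurs_split t' s] = set0.
    by apply/setP => s; rewrite !inE; apply/negP => /occurs_split_fits; lia.
  by rewrite !no_fit.
have outside X Y s i : framed_pattern m X -> occurs_chain m d X s a r ->
    i \in A -> i < t \/ a + r * d + 1 <= i -> occurs m Y (seg_flip a ltbn s) i = occurs m Y s i.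
  move=> framed_X chain_X i_in i_out; apply: occurs_seg_flip_outside framed_X m_eq chain_X _.
  by case: i_out => [/(before_chain i_in)|/(after_chain i_in)]; [left|right].
apply: card_involution (seg_flipK a ltbn) _ _ => s; rewrite /occurs_split => /allP split_s.
all: apply/allP => i i_in.
- have chain_R : occurs_chain m d R s a r.
    move=> k lekr; have /andP[le_t _] := chain_range lekr.
    by have := split_s _ (chain_in lekr); rewrite ltnNge le_t.
  case: (ltnP i t) => [lt_it|le_ti]; last case: (ltnP i (a + r * d + 1)) => [lt_i_next|le_next_i].
  + rewrite ifT ?(outside R) //; [|by left|lia].
    by have := split_s i i_in; rewrite lt_it.
  + have [k lekr ->] := in_chain i_in ltac:(lia).
    exact: occurs_seg_flip_chain.
  + rewrite (outside R) //; last by right.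
    by have := split_s i i_in; rewrite ltnNge le_ti.
- have chain_RC : occurs_chain m d (revcomp m R) s a r.
    move=> k lekr; have /andP[_ lt_next] := chain_range lekr.
    by have := split_s _ (chain_in lekr); rewrite lt_next.
  have framed_RC := framed_revcomp framed_R.
  case: (ltnP i t) => [lt_it|le_ti]; last case: (ltnP i (a + r * d + 1)) => [lt_i_next|le_next_i].
  + rewrite (outside (revcomp m R)) //; last by left.
    by have := split_s i i_in; rewrite ifT //; lia.
  + have [k lekr ->] := in_chain i_in ltac:(lia).
    by rewrite -occurs_revcompK; apply: occurs_seg_flip_chain.
  + rewrite (outside (revcomp m R)) //; last by right.
    by have := split_s i i_in; rewrite ifF //; lia.
Qed.
End Step.

Lemma occurs_split_end t s : (forall i, i \in A -> i < t) ->
  occurs_split t s = all (occurs m (revcomp m R) s) A.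
Proof. by move=> A_below; apply: eq_in_all => i /A_below ->. Qed.

Lemma exists_first_chain t : has (fun i => t <= i) A ->
  exists a r, [/\ a \in A, t <= a, forall i, i \in A -> t <= i -> a <= i,
                  forall k, k <= r -> a + k * d \in A & a + r.+1 * d \notin A].
Proof.
move=> /hasP[i0 i0_in le_ti0].
have [|a /andP[a_in le_ta] a_min] := ex_minnP (P := fun i => (i \in A) && (t <= i)).
  by exists i0; rewrite i0_in.
have gt0d : 0 < d by case: framed_R; lia.
have [|r r_end r_min] := ex_minnP (P := fun k => a + k.+1 * d \notin A).
  exists (\max_(i <- A) i); apply/negP => /(@leq_bigmax_seq _ A xpredT (fun i => i))/(_ isT).
  by set M := \max_(i <- A) i; have := leq_pmulr M gt0d; rewrite mulSn; lia.
exists a, r; split=> // [i i_in le_ti|[|k] lekr]; first by apply: a_min; rewrite i_in.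
  by rewrite mul0n addn0.
by apply/negPn/negP => /r_min; lia.
Qed.

Lemma card_occurs_split t : step_closed t ->
  #|[set s : 'S_n | occurs_split t s]| = #|[set s : 'S_n | all (occurs m (revcomp m R) s) A]|.
Proof.
have [N] := ubnP (count (fun i => t <= i) A); elim: N t => // N IHN t lt_count t_closed.
case: (boolP (has (fun i => t <= i) A)) => [/exists_first_chain[a [r]]|].
  case=> a_in le_ta a_min chain_in chain_end.
  rewrite (card_occurs_split_step t_closed a_in le_ta a_min chain_in chain_end).
  apply: IHN (step_closed_next t_closed a_in le_ta a_min chain_in chain_end).
  rewrite -ltnS (leq_trans _ lt_count) // ltnS; apply: sub_count_lt => [i|]; first lia.
  by exists a => //=; rewrite le_ta -ltnNge; lia.
move/hasPn => A_below; apply: eq_card => s; rewrite !inE occurs_split_end // => i /A_below.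
by rewrite -ltnNge.
Qed.
End Flips.

Lemma card_occurs_revcomp m n R (A : seq nat) : framed_pattern m R ->
  #|[set s : 'S_n | all (occurs m R s) A]| = #|[set s : 'S_n | all (occurs m (revcomp m R) s) A]|.
Proof.
move=> framed_R; have framed_RC := framed_revcomp framed_R.
have [d m_eq] : exists d, m = d.+2 by case: framed_R; exists (m - 2); lia.
case: (pickP [pred s : 'S_n | all (occurs m R s) A || all (occurs m (revcomp m R) s) A])
  => [s0 /orP occ_s0|none]; last first.
  have -> : [set s : 'S_n | all (occurs m R s) A] = set0.
    by apply/setP => s; rewrite !inE; have /norP[/negbTE] := none s.
  have -> : [set s : 'S_n | all (occurs m (revcomp m R) s) A] = set0.
    by apply/setP => s; rewrite !inE; have /norP[_ /negbTE] := none s.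
  by [].
have A_gaps i j : i \in A -> j \in A -> i < j -> d <= j - i.
  move=> i_in j_in ltij; case: occ_s0 => /allP occ.
    by have := occurs_gap framed_R (occ i i_in) (occ j j_in) ltij; lia.
  by have := occurs_gap framed_RC (occ i i_in) (occ j j_in) ltij; lia.
by rewrite -(card_occurs_split n framed_R m_eq A_gaps (t := 0)).
Qed.

Definition compl_perm n (s : 'S_n) : 'S_n := (s * perm (@rev_ord_inj n))%g.

Lemma compl_permK n : involutive (@compl_perm n).
Proof. by move=> s; apply/permP => x; rewrite !permM !permE rev_ordK. Qed.

Lemma entry_compl_perm n (s : 'S_n) x : x < n -> entry (compl_perm s) x = n - (entry s x).-1.
Proof.
move=> ltxn; have -> : x = Ordinal ltxn by [].
by rewrite !entryE permM permE /=; have := ltn_ord (s (Ordinal ltxn)); lia.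
Qed.

Lemma entry_compl_perm_lt n (s : 'S_n) x y : x < n -> y < n ->
  (entry (compl_perm s) x < entry (compl_perm s) y) = (entry s y < entry s x).
Proof.
move=> ltxn ltyn; have := entry_bounds s ltxn; have := entry_bounds s ltyn.
by rewrite !entry_compl_perm //; lia.
Qed.

Lemma occurs_compl_perm m n R (s : 'S_n) i :
  occurs m R (compl_perm s) i = occurs m (fun u v => R v u) s i.
Proof.
apply/occursP/occursP => -[lein cmp_i]; split=> // u v ltu ltv.
  by rewrite -cmp_i // entry_compl_perm_lt //; lia.
by rewrite entry_compl_perm_lt ?cmp_i //; lia.
Qed.

Lemma card_occurs_compl m n R (A : seq nat) :
  #|[set s : 'S_n | all (occurs m R s) A]|
  = #|[set s : 'S_n | all (occurs m (fun u v => R v u) s) A]|.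
Proof.
apply: card_involution (@compl_permK n) _ _ => s /allP occ_s; apply/allP => i i_in.
  by rewrite occurs_compl_perm (eq_occurs _ _ (R2 := R)) ?occ_s.
by rewrite occurs_compl_perm occ_s.
Qed.

Lemma entry_rev_perm m (p : 'S_m) u : u < m -> entry (rev_perm p) u = entry p (m.-1 - u).
Proof.
move=> ltum; have -> : u = Ordinal ltum by [].
have ltm : m.-1 - u < m by lia.
rewrite (_ : m.-1 - u = Ordinal ltm) // !entryE /rev_perm permM permE.
by congr (p _).+1; apply: val_inj => /=; lia.
Qed.

Lemma perm_rel_rev_perm m (p : 'S_m) u v : u < m -> v < m ->
  perm_rel (rev_perm p) u v = revcomp m (perm_rel p) v u.
Proof. by move=> ltu ltv; rewrite /perm_rel /revcomp !entry_rev_perm. Qed.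

(* Positions in [Em p s] lie in [1, n + 1]: when [n < m] the truncated
   subtraction makes [iota 1 (n - m + 1)] equal to [[:: 1]]. *)
Definition Em_set m n (p : 'S_m) (s : 'S_n) : {set 'I_n.+2} := [set i | val i \in Em p s].

Lemma Em_lt m n (p : 'S_m) (s : 'S_n) j : j \in Em p s -> j < n.+2.
Proof. by rewrite mem_filter mem_iota => /andP[_]; lia. Qed.

Lemma subset_Em_set m n (p : 'S_m) (s : 'S_n) (B : {set 'I_n.+2}) :
  (B \subset Em_set p s) =
  (ord0 \notin B) && all (occurs m (perm_rel p) s) [seq (val i).-1 | i <- enum B].
Proof.
apply/subsetP/andP => [sub_B|[B0 /allP occ_B] i Bi].
  split; first by apply/negP => /sub_B; rewrite inE mem_Em.
  apply/allP => j /mapP[i]; rewrite mem_enum => /sub_B.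
  by rewrite inE mem_Em => /andP[_ occ_i] ->.
rewrite inE mem_Em occ_B ?andbT; last by apply/mapP; exists i; rewrite ?mem_enum.
rewrite lt0n; apply: contraNneq B0 => i0.
by rewrite (_ : ord0 = i) //; apply: val_inj.
Qed.

Lemma acountE m n (p : 'S_m) (S : seq nat) : all (fun j => j < n.+2) S ->
  acount p n S = #|[set s : 'S_n | Em_set p s == [set i | val i \in S]]|.
Proof.
move=> /allP S_lt; apply: eq_card => s; rewrite !inE.
apply/andP/eqP => [[/allP Em_S /allP S_Em]|Em_eq].
  by apply/setP => i; rewrite !inE; apply/idP/idP => [/Em_S|/S_Em].
split; apply/allP => j.
  by move=> /[dup] /Em_lt lt_j; move/setP/(_ (Ordinal lt_j)): Em_eq; rewrite !inE => ->.
by move=> /[dup] /S_lt lt_j; move/setP/(_ (Ordinal lt_j)): Em_eq; rewrite !inE => <-.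
Qed.

Lemma acount_out m n (p : 'S_m) (S : seq nat) : ~~ all (fun j => j < n.+2) S -> acount p n S = 0.
Proof.
case/allPn => j j_in; rewrite -leqNgt => le_j; apply: eq_card0 => s; rewrite !inE.
by apply/negP => /andP[_ /allP/(_ j j_in)/Em_lt]; lia.
Qed.

Lemma super_strongly_cWilf_of_card_occurs m (p q : 'S_m) :
  (forall n (L : seq nat), #|[set s : 'S_n | all (occurs m (perm_rel p) s) L]|
                         = #|[set s : 'S_n | all (occurs m (perm_rel q) s) L]|) ->
  super_strongly_cWilf p q.
Proof.
move=> eq_occ n S.
have [S_lt|S_out] := boolP (all (fun j => j < n.+2) S); last by rewrite !acount_out.
rewrite !acountE //; apply: eq_card_fibers_of_supsets => B.
set L := [seq (val i).-1 | i <- enum B].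
have card_sub (r : 'S_m) : #|[set s : 'S_n | B \subset Em_set r s]|
    = #|[set s : 'S_n | (ord0 \notin B) && all (occurs m (perm_rel r) s) L]|.
  by apply: eq_card => s; rewrite !inE subset_Em_set.
by rewrite !card_sub; case: (ord0 \in B) => //=; apply: eq_occ.
Qed.

Theorem theorem5p6 (m : nat) (p : 'S_m) :
  head 0 (pword p) = 1 -> last 0 (pword p) = m -> size (overlaps p) = 2 ->
  super_strongly_cWilf p (rev_perm p).
Proof.
move=> p_first p_last size_ovl; apply: super_strongly_cWilf_of_card_occurs => n L.
rewrite (card_occurs_revcomp _ _ (framed_perm_rel p_first p_last size_ovl)) card_occurs_compl.
apply: eq_card => s; rewrite !inE; apply: eq_all => i; apply: eq_occurs => u v ltu ltv.
by rewrite perm_rel_rev_perm.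
Qed.
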